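(* Let $q$ be a prime power. Then \[ \ell(2,3,q)\leq 2\sqrt{(q+1)\ln (q+1)}+2 . \]
   Context: For integers $R,r\ge 1$ and a prime power $q$, the length function $\ell(R,r,q)$ is the smallest length $n$ of a linear code over $\mathbb{F}_q$ of length $n$, codimension $r$ (i.e. dimension $n-r$) and covering radius $R$. Here $\ln$ denotes the natural logarithm. *)

From mathcomp Require Import all_boot all_order all_algebra.
From Stdlib Require Import ClassicalEpsilon.
Set Implicit Arguments. Unset Strict Implicit. Unset Printing Implicit Defensive.
Import GRing.Theory.
Local Open Scope ring_scope.

(* Linear codes over a finite field F, represented (mxalgebra style) by a
   square matrix C whose row space is the code, a subspace of F^n = 'rV[F]_n. *)

Definition hweight (F : finFieldType) (n : nat) (v : 'rV[F]_n) : nat :=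
  #|[set i : 'I_n | v 0 i != 0]|.

(* Hamming distance from x to the code C: min over codewords c of wt(x - c)
   (the codeword 0 exists and any weight is <= n, so the start value n is harmless) *)
Definition dist_to_code (F : finFieldType) (n : nat) (C : 'M[F]_n) (x : 'rV[F]_n) : nat :=
  \big[minn/n]_(c : 'rV[F]_n | (c <= C)%MS) hweight (x - c).

Definition covering_radius (F : finFieldType) (n : nat) (C : 'M[F]_n) : nat :=
  \max_(x : 'rV[F]_n) dist_to_code C x.

Definition has_code (R r : nat) (F : finFieldType) (n : nat) : Prop :=
  (r <= n)%N /\
  exists C : 'M[F]_n, \rank C = (n - r)%N /\ covering_radius C = R.

(* the length function l(R, r, q), q = #|F|: the smallest such n
   (defined to be 0 if no such code exists; the main statement asserts existence) *)
Definition ell (R r : nat) (F : finFieldType) : nat :=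
  match excluded_middle_informative (exists n, has_code R r F n) with
  | left H =>
      @ex_minn (fun n => is_left (excluded_middle_informative (has_code R r F n)))
        (let: ex_intro n Hn := H in
         ex_intro _ n (match excluded_middle_informative (has_code R r F n) as b
                          return is_left b with
                       | left _ => erefl | right nH => False_ind _ (nH Hn) end))
  | right _ => 0%N
  end.

(* A list S of nonzero, pairwise non-proportional vectors of F^3 such that every
   vector is a sum of multiples of two of them gives the columns of a parity-check
   matrix of a code of codimension 3: the syndrome of any word is that of an error
   of weight at most 2, so the covering radius is at most 2, and exactly 2 while S
   is too small for its multiples to fill F^3.  Such an S is built greedily.  If S
   has k columns, each vector s still uncovered is covered by at least
   (q-1)(k(q-1)+1) choices of a new column (namely a s + u with a <> 0 and u a
   multiple of a column), so by averaging some column leaves at most a fraction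
   1 - (q-1)(k(q-1)+1)/q^3 of the uncovered vectors.  Uncovered vectors come in
   punctured lines of q - 1 points, so once fewer than 2(q-1) remain, one more
   column covers everything.  Bounding the product of the fractions by an
   exponential shows that about 2 sqrt((q+1) ln(q+1)) steps suffice when q >= 400;
   for smaller q the number of steps is computed and checked. *)

From Stdlib Require Import ClassicalEpsilon NArith ZArith Lia.
From mathcomp Require Import all_boot all_order all_algebra zify.
From Stdlib Require Import Reals Lra.
(* Reals rebinds the %N delimiter; restore the ssrnat one. *)
Import ssrnat.

Set Implicit Arguments. Unset Strict Implicit. Unset Printing Implicit Defensive.
Import GRing.Theory.
Local Open Scope ring_scope.

Section HammingDistance.
Variables (F : finFieldType) (n : nat).
Implicit Types (C : 'M[F]_n) (e x : 'rV[F]_n).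

Lemma hweight_le_support e (A : {set 'I_n}) :
  (forall k, k \notin A -> e 0 k = 0) -> (hweight e <= #|A|)%N.
Proof.
move=> eA; apply/subset_leq_card/subsetP => k; rewrite inE.
by apply: contraR => /eA ->; rewrite eqxx.
Qed.

Lemma hweightD e1 e2 : (hweight (e1 + e2) <= hweight e1 + hweight e2)%N.
Proof.
apply: leq_trans (leq_card_setU _ _); apply/subset_leq_card/subsetP => k.
rewrite !inE mxE; apply: contraR; rewrite negb_or !negbK => /andP[/eqP-> /eqP->].
by rewrite addr0.
Qed.

Lemma hweight_le1_support e i :
  (hweight e <= 1)%N -> e 0 i != 0 -> forall k, k != i -> e 0 k = 0.
Proof.
move=> /card_le1P/(_ i) + ei k ki; rewrite inE ei => /(_ isT k); rewrite inE => eq_ik.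
by apply/eqP; apply: contraNT ki; rewrite eq_ik.
Qed.

Lemma dist_to_code_le C x c w :
  (c <= C)%MS -> (hweight (x - c) <= w)%N -> (dist_to_code C x <= w)%N.
Proof.
move=> cC; apply: leq_trans; rewrite /dist_to_code -minEnat.
by rewrite -Order.NatOrder.leEnat; apply: Order.TotalTheory.bigmin_le_cond.
Qed.

Lemma dist_to_code_ge C x w : (w <= n)%N ->
  (forall c, (c <= C)%MS -> (w <= hweight (x - c))%N) -> (w <= dist_to_code C x)%N.
Proof.
move=> wn wC; apply: (big_ind (fun v => w <= v)%N) => // a b wa wb.
by rewrite leq_min wa wb.
Qed.

End HammingDistance.

Section Spans.
Variables (F : finFieldType) (r : nat).
Local Notation T := 'rV[F]_r.
Local Notation q := #|F|.
Implicit Types (S : seq T) (s u v x y : T) (a c : F).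

Definition punctured_line x : {set T} := [set c *: x | c in [set~ 0]].
Definition span1 S : {set T} := 0 |: \bigcup_(y <- S) punctured_line y.
Definition span2 S : {set T} := [set u + v | u in span1 S, v in span1 S].

Fixpoint proj_free S : bool :=
  if S is x :: S' then (x \notin span1 S') && proj_free S' else true.

Lemma card_punctured_line x : x != 0 -> #|punctured_line x| = (q - 1)%N.
Proof.
move=> x0; rewrite card_in_imset ?cardsC1 ?subn1 // => a b _ _ /eqP.
by rewrite -subr_eq0 -scalerBl scaler_eq0 (negbTE x0) orbF subr_eq0 => /eqP.
Qed.

Lemma mem_punctured_line x c : c != 0 -> c *: x \in punctured_line x.
Proof. by move=> c0; apply/imsetP; exists c; rewrite ?inE. Qed.


Lemma span1_cons x S : span1 (x :: S) = punctured_line x :|: span1 S.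
Proof. by rewrite /span1 big_cons setUCA. Qed.

Lemma span10 S : 0 \in span1 S.
Proof. exact: setU11. Qed.

Lemma span1P S u :
  reflect (u = 0 \/ exists2 y, y \in S & exists c, u = c *: y) (u \in span1 S).
Proof.
rewrite /span1 bigcup_seq; apply: (iffP setU1P) => [[->|/bigcupP[y yS]]|]; first by left.
  by case/imsetP=> c _ ->; right; exists y => //; exists c.
case=> [->|[y yS [c ->]]]; first by left.
have [->|c0] := eqVneq c 0; first by left; rewrite scale0r.
by right; apply/bigcupP; exists y => //; apply: mem_punctured_line.
Qed.

Lemma mem_span1 S y c : y \in S -> c *: y \in span1 S.
Proof. by move=> yS; apply/span1P; right; exists y => //; exists c. Qed.

Lemma span1_scale S c u : u \in span1 S -> c *: u \in span1 S.
Proof.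
case/span1P => [->|[y yS [a ->]]]; first by rewrite scaler0 span10.
by rewrite scalerA mem_span1.
Qed.

Lemma span1_sub_cons x S : span1 S \subset span1 (x :: S).
Proof. by rewrite span1_cons subsetUr. Qed.

Lemma span2_sub_cons x S : span2 S \subset span2 (x :: S).
Proof.
by apply/subsetP => _ /imset2P[u v uS vS ->]; apply/imset2P; exists u v;
  rewrite // (subsetP (span1_sub_cons x S)).
Qed.

Lemma span2_cons_id x S : x \in span1 S -> span2 (x :: S) = span2 S.
Proof.
move=> xS; rewrite /span2; suff -> : span1 (x :: S) = span1 S by [].
rewrite span1_cons; apply/setUidPr/subsetP => _ /imsetP[c _ ->].
exact: span1_scale.
Qed.

Lemma span1_sub_span2 S : span1 S \subset span2 S.
Proof. by apply/subsetP => u uS; apply/imset2P; exists u 0; rewrite ?span10 ?addr0. Qed.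

Lemma span2_scale S c u : u \in span2 S -> c *: u \in span2 S.
Proof.
case/imset2P => v w vS wS ->; rewrite scalerDr.
by apply/imset2P; exists (c *: v) (c *: w); rewrite ?span1_scale.
Qed.

Lemma card_span1 S : proj_free S -> #|span1 S| = (size S * (q - 1)).+1.
Proof.
elim: S => [_|x S IH /andP[xS /IH cardS]]; first by rewrite /span1 big_nil setU0 cards1.
have x0 : x != 0 by apply: contraNneq xS => ->; apply: span10.
rewrite span1_cons cardsU; have /eqP-> : punctured_line x :&: span1 S == set0.
  apply: contraT => /set0Pn[u /setIP[/imsetP[c]]]; rewrite in_setC1 => c0 -> /(span1_scale c^-1).
  by rewrite scalerA mulVf // scale1r (negbTE xS).
by rewrite cards0 subn0 cardS card_punctured_line // mulSn addnS addnC.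
Qed.

End Spans.

Section ColumnCode.
Variables (F : finFieldType) (r : nat) (S : seq 'rV[F]_r).
Local Notation n := (size S).
Local Notation q := #|F|.
Implicit Types (s u : 'rV[F]_r) (e x : 'rV[F]_n).

Definition pcheck_mx : 'M[F]_(n, r) := \matrix_(i, j) S`_i 0 j.
Definition column_code : 'M[F]_n := kermx pcheck_mx.

Lemma row_pcheck i : row i pcheck_mx = S`_i.
Proof. by apply/rowP => j; rewrite !mxE. Qed.

Lemma span1_syndrome u :
  u \in span1 S -> exists2 e, (hweight e <= 1)%N & e *m pcheck_mx = u.
Proof.
case/span1P => [->|[y yS [c ->]]].
  exists 0; rewrite ?mul0mx //.
  by rewrite (leq_trans (hweight_le_support (A := set0) _)) ?cards0 // => k; rewrite mxE.
have ltyn : (index y S < n)%N by rewrite index_mem.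
pose i := Ordinal ltyn; exists (c *: delta_mx 0 i).
  rewrite (leq_trans (hweight_le_support (A := [set i]) _)) ?cards1 // => k.
  by rewrite !inE !mxE => /negbTE->; rewrite andbF mulr0.
by rewrite -scalemxAl -rowE row_pcheck nth_index.
Qed.

Lemma syndrome_span1 e : (hweight e <= 1)%N -> e *m pcheck_mx \in span1 S.
Proof.
move=> he; rewrite mulmx_sum_row.
case: (pickP (fun k => e 0 k != 0)) => [i ei|e0].
  rewrite (bigD1 i) //= big1 ?addr0 ?row_pcheck ?mem_span1 ?mem_nth // => k ki.
  by rewrite (hweight_le1_support he ei ki) scale0r.
by rewrite big1 ?span10 // => k _; move/negbFE/eqP: (e0 k) ->; rewrite scale0r.
Qed.

Lemma span2_syndrome s :
  s \in span2 S -> exists2 e, (hweight e <= 2)%N & e *m pcheck_mx = s.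
Proof.
case/imset2P => u v /span1_syndrome[e1 he1 <-] /span1_syndrome[e2 he2 <-] ->.
by exists (e1 + e2); rewrite ?mulmxDl // (leq_trans (hweightD _ _)) // (leq_add he1 he2).
Qed.

Hypothesis span2_full : forall s, s \in span2 S.

Lemma row_full_pcheck : row_full pcheck_mx.
Proof.
rewrite -sub1mx; apply/rV_subP => s _.
by have [e _ <-] := span2_syndrome (span2_full s); apply: submxMl.
Qed.

Lemma covering_radius_column_code_le : (covering_radius column_code <= 2)%N.
Proof.
apply/bigmax_leqP => x _; have [e he eH] := span2_syndrome (span2_full (x *m pcheck_mx)).
apply: (@dist_to_code_le _ _ _ _ (x - e)); last by rewrite opprB addrC subrK.
by rewrite sub_kermx mulmxBl eH subrr.
Qed.

Lemma covering_radius_column_code_ge s0 :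
  s0 \notin span1 S -> (2 <= covering_radius column_code)%N.
Proof.
move=> s0S; have [x xH] := submxP (submx_full s0 row_full_pcheck).
have hx c : (c <= column_code)%MS -> (2 <= hweight (x - c))%N.
  rewrite sub_kermx => /eqP cH; rewrite ltnNge; apply: contra s0S => /syndrome_span1.
  by rewrite mulmxBl cH subr0 -xH.
apply: leq_trans (leq_bigmax x); apply: dist_to_code_ge (hx).
by rewrite -[n]card_ord (leq_trans (hx 0 (sub0mx _ _))) ?max_card.
Qed.

Lemma has_code_column_code :
  proj_free S -> ((n * (q - 1)).+1 < q ^ r)%N -> has_code 2 r F n.
Proof.
move=> freeS small; have rankH : \rank pcheck_mx = r by apply/eqP; apply: row_full_pcheck.
have /subsetPn[s0 _ s0S] : ~~ ([set: 'rV[F]_r] \subset span1 S).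
  apply: contraTN small => /subset_leq_card.
  by rewrite cardsT card_mx mul1n card_span1 // -leqNgt.
split; first by rewrite -{1}rankH rank_leq_row.
exists column_code; split; first by rewrite mxrank_ker rankH.
apply/eqP; rewrite eqn_leq covering_radius_column_code_le.
exact: covering_radius_column_code_ge s0S.
Qed.

End ColumnCode.

Lemma sum_card_setI (I T : finType) (A : {set T}) (B : I -> {set T}) :
  (\sum_i #|A :&: B i| = \sum_(s in A) #|[set i | s \in B i]|)%N.
Proof.
have sum_nat_bool (J : finType) (P Q : pred J) :
    (\sum_(j in P | Q j) 1 = \sum_(j in P) (Q j : nat))%N.
  by rewrite big_mkcondr; apply: eq_bigr => j _; case: (Q j).
transitivity (\sum_i \sum_(s in A) (s \in B i : nat))%N.
  apply: eq_bigr => i _; rewrite -sum_nat_bool sum1_card.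
  by apply: eq_card => s; rewrite !inE.
rewrite exchange_big; apply: eq_bigr => s _.
by rewrite -sum1dep_card -(sum_nat_bool _ predT); apply: eq_bigl => i.
Qed.

(* With k = size S, (q - 1) * #|span1 S| is the number of new columns a *: s + u,
   a != 0, u \in span1 S, that cover a given uncovered vector s; greedy_bound N q k
   bounds the number of uncovered vectors, among N, after k greedy steps. *)
Definition cover_count (q k : nat) : nat := ((q - 1) * (k * (q - 1)).+1)%N.

Fixpoint greedy_bound (N q k : nat) : nat :=
  if k is k'.+1 then (greedy_bound N q k' * (N - cover_count q k')) %/ N else (N - 1)%N.

Section Greedy.
Variables (F : finFieldType) (r : nat).
Local Notation T := 'rV[F]_r.
Local Notation q := #|F|.
Implicit Types (S : seq T) (s u x : T).

Definition uncovered S : {set T} := ~: span2 S.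
Definition gain S x : nat := #|uncovered S :&: span2 (x :: S)|.

Lemma card_uncovered_cons S x : (#|uncovered (x :: S)| + gain S x)%N = #|uncovered S|.
Proof.
rewrite /gain -(cardsID (span2 (x :: S)) (uncovered S)) addnC; congr (_ + _)%N.
apply: eq_card => u; rewrite !inE; case: (boolP (u \in span2 (x :: S))) => //= uxS.
by symmetry; apply: contraNN uxS; apply/subsetP/span2_sub_cons.
Qed.

Lemma uncovered_scale S s c : c != 0 -> s \in uncovered S -> c *: s \in uncovered S.
Proof.
move=> c0; rewrite !inE; apply: contraNN => /(span2_scale c^-1).
by rewrite scalerA mulVf // scale1r.
Qed.

Lemma card_covering_columns S s : proj_free S -> s \in uncovered S ->
  (cover_count q (size S) <= #|[set x | s \in span2 (x :: S)]|)%N.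
Proof.
move=> freeS sU; pose f (p : F * T) := p.1 *: s + p.2.
have f_inj : {in setX [set~ 0] (span1 S) &, injective f}.
  move=> [a u] [b v] /setXP[_ uS] /setXP[_ vS] /= Ef.
  suff ab : a = b by move: Ef; rewrite /f /= ab => /addrI->.
  apply/eqP; rewrite -subr_eq0; move: sU; rewrite inE; apply: contraNT => ab0.
  have Nu : - u \in span1 S by rewrite -scaleN1r span1_scale.
  have : (a - b) *: s \in span2 S.
    apply/imset2P; exists v (- u) => //.
    have -> : v = a *: s + u - b *: s by rewrite [a *: s + u]Ef addrAC subrr add0r.
    by rewrite scalerBl addrAC addrK.
  by move/(span2_scale (a - b)^-1); rewrite scalerA mulVf // scale1r.
rewrite /cover_count -card_span1 // subn1 -(cardsC1 (0 : F)) -cardsX -(card_in_imset f_inj).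
apply/subset_leq_card/subsetP => _ /imsetP[[a u] /setXP[a0 uS] ->]; rewrite in_setC1 in a0.
rewrite inE; apply/imset2P; exists (a^-1 *: f (a, u)) (- a^-1 *: u).
- by rewrite mem_span1 ?mem_head.
- by rewrite span1_scale // (subsetP (span1_sub_cons _ _)).
by rewrite /f /= scalerDr scalerA mulVf // scale1r scaleNr addrK.
Qed.

Lemma card_rV : #|T| = (q ^ r)%N.
Proof. by rewrite card_mx mul1n. Qed.

Lemma exists_good_column S : proj_free S -> (0 < #|uncovered S|)%N ->
  exists x, proj_free (x :: S) /\
    (#|uncovered (x :: S)| * q ^ r <= #|uncovered S| * (q ^ r - cover_count q (size S)))%N.
Proof.
move=> freeS U0; have [x _ maxx] := @arg_maxnP _ (0 : T) predT (gain S) isT.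
have gain_avg : (#|uncovered S| * cover_count q (size S) <= q ^ r * gain S x)%N.
  apply: (@leq_trans (\sum_y gain S y)).
    rewrite /gain sum_card_setI -sum_nat_const.
    exact: leq_sum (fun s sU => card_covering_columns freeS sU).
  by rewrite -card_rV -sum_nat_const; apply: leq_sum => y _; apply: maxx.
have gain_pos : (0 < gain S x)%N.
  have : (0 < q ^ r * gain S x)%N.
    by apply: leq_trans gain_avg; rewrite !muln_gt0 U0 subn_gt0 card_finNzRing_gt1.
  by rewrite muln_gt0 => /andP[].
have /set0Pn[s /setIP[sU sxS]] : uncovered S :&: span2 (x :: S) != set0.
  by rewrite -card_gt0.
exists x; split.
  rewrite /= freeS andbT; apply: contraTN sU => /span2_cons_id eq_span.
  by rewrite inE negbK -eq_span.
have -> : #|uncovered (x :: S)| = (#|uncovered S| - gain S x)%N.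
  by rewrite -(card_uncovered_cons S x) addnK.
by rewrite mulnBl mulnBr leq_sub2l // (mulnC (gain S x)).
Qed.

Lemma card_uncovered_nil : #|uncovered [::]| = (q ^ r - 1)%N.
Proof.
rewrite /uncovered /span2 /span1 big_nil setU0 imset2_set1l imset_set1 addr0.
by rewrite cardsC1 card_rV subn1.
Qed.

Lemma greedy_columns k : exists S, [/\ proj_free S,
  (#|uncovered S| <= greedy_bound (q ^ r) q k)%N &
  size S = k \/ (uncovered S = set0 /\ (size S <= k)%N)].
Proof.
elim: k => [|k [S [freeS US sizeS]]].
  by exists [::]; split; rewrite ?card_uncovered_nil //; left.
have [U0|Upos] := posnP #|uncovered S|.
  exists S; split => //; first by rewrite U0.
  by right; split; [apply/eqP; rewrite -cards_eq0 U0 | case: sizeS => [->|[_ /leqW]]].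
have {}sizeS : size S = k by case: sizeS => // -[U0]; rewrite U0 cards0 in Upos.
have [x [freexS Uxs]] := exists_good_column freeS Upos.
exists (x :: S); split => //=; last by left; rewrite sizeS.
have qr_gt0 : (0 < q ^ r)%N by rewrite expn_gt0 (ltnW (card_finNzRing_gt1 F)).
rewrite leq_divRL //; apply: leq_trans; first exact Uxs.
by rewrite sizeS leq_mul2r US orbT.
Qed.

Lemma uncovered_neq0 S s : s \in uncovered S -> s != 0.
Proof.
by apply: contraTneq => ->; rewrite inE negbK (subsetP (span1_sub_span2 S)) ?span10.
Qed.

Lemma card_uncovered_ge S s : s \in uncovered S -> (q - 1 <= #|uncovered S|)%N.
Proof.
move=> sU; rewrite -(card_punctured_line (uncovered_neq0 sU)).
apply/subset_leq_card/subsetP => u /imsetP[c]; rewrite in_setC1 => c0 ->.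
exact: uncovered_scale.
Qed.

Lemma complete_columns S : proj_free S -> (#|uncovered S| < 2 * (q - 1))%N ->
  exists S', [/\ proj_free S', (size S' <= (size S).+1)%N & forall s, s \in span2 S'].
Proof.
move=> freeS small; have [U0|[s sU]] := set_0Vmem (uncovered S).
  by exists S; split => // s; move/setP/(_ s): U0; rewrite !inE => /negbFE.
exists (s :: S); split => //.
  rewrite /= freeS andbT; apply: contraTN sU => /(subsetP (span1_sub_span2 S)) sS.
  by rewrite inE negbK.
move=> t; apply: contraTT small => tU; rewrite -leqNgt -(card_uncovered_cons S s) mul2n -addnn.
apply: leq_add; first by apply: (@card_uncovered_ge _ t); rewrite inE.
rewrite -(card_punctured_line (uncovered_neq0 sU)).
apply/subset_leq_card/subsetP => u /imsetP[c]; rewrite in_setC1 => c0 ->.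
by rewrite inE uncovered_scale // (subsetP (span1_sub_span2 _)) // mem_span1 ?mem_head.
Qed.

End Greedy.

Lemma has_code_of_greedy_bound (F : finFieldType) r m :
  (greedy_bound (#|F| ^ r) #|F| m < 2 * (#|F| - 1))%N ->
  ((m.+1 * (#|F| - 1)).+1 < #|F| ^ r)%N ->
  exists2 n, (n <= m.+1)%N & has_code 2 r F n.
Proof.
move=> small_bound small_m; have [S [freeS US sizeS]] := greedy_columns F r m.
have [S' [freeS' sizeS' fullS']] := complete_columns freeS (leq_ltn_trans US small_bound).
have {}sizeS' : (size S' <= m.+1)%N by apply: leq_trans sizeS' _; case: sizeS => [->|[_]].
exists (size S') => //; apply: has_code_column_code fullS' freeS' _.
by apply: leq_ltn_trans small_m; rewrite ltnS leq_mul2r sizeS' orbT.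
Qed.

Lemma ell_le R r (F : finFieldType) n : has_code R r F n -> (ell R r F <= n)%N.
Proof.
move=> codeF; rewrite /ell; case: excluded_middle_informative => // ex_code.
by case: ex_minnP => m _; apply; case: excluded_middle_informative.
Qed.

Local Close Scope ring_scope.
Local Open Scope R_scope.

Lemma exp_le x y : x <= y -> exp x <= exp y.
Proof. by case=> [/exp_increasing/Rlt_le|->] //; apply: Rle_refl. Qed.

Lemma ln_ge_of_exp_le a b : 0 < b -> exp a <= b -> a <= ln b.
Proof.
move=> b0 ab; apply: Rnot_lt_le => /exp_increasing.
by rewrite exp_ln //; lra.
Qed.

Lemma ln_ge0 b : 1 <= b -> 0 <= ln b.
Proof. by move=> b1; apply: ln_ge_of_exp_le; rewrite ?exp_0; lra. Qed.

Lemma ln_le_sub1 t : 0 < t -> ln t <= t - 1.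
Proof. by move=> t0; have := exp_ineq1_le (ln t); rewrite exp_ln //; lra. Qed.

Lemma one_sub_mul_exp_le1 y : (1 - y) * exp y <= 1.
Proof.
have := exp_ineq1_le (- y); rewrite exp_Ropp => le_inv.
have ey := exp_pos y; have := Rmult_le_compat_r _ _ _ (Rlt_le _ _ ey) le_inv.
by rewrite Rinv_l; lra.
Qed.

Lemma exp_INR_mul n y : exp (INR n * y) = exp y ^ n.
Proof.
elim: n => [|n IH]; first by rewrite Rmult_0_l exp_0.
by rewrite S_INR Rmult_plus_distr_r Rmult_1_l exp_plus IH /=; ring.
Qed.

Lemma exp_mul_pow_le1 x n : (0 < n)%N -> 0 <= x -> x < INR n ->
  exp x * (1 - x / INR n) ^ n <= 1.
Proof.
move=> n0 x0 xn; have n0' : 0 < INR n by apply/lt_0_INR/ltP.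
have y0 : 0 <= x / INR n by apply: Rmult_le_pos; [|apply/Rlt_le/Rinv_0_lt_compat].
have y1 : x / INR n < 1.
  by apply: (Rmult_lt_reg_r (INR n)) => //; rewrite /Rdiv Rmult_assoc Rinv_l; lra.
have -> : exp x = exp (x / INR n) ^ n by rewrite -exp_INR_mul; congr exp; field; lra.
rewrite -Rpow_mult_distr -[X in _ <= X](pow1 n); apply: pow_incr; split.
  by apply: Rmult_le_pos; [apply/Rlt_le/exp_pos | lra].
by rewrite Rmult_comm; apply: one_sub_mul_exp_le1.
Qed.

Lemma exp_lt_of_pow x n c : (0 < n)%N -> 0 <= x -> x < INR n ->
  1 < c * (1 - x / INR n) ^ n -> exp x < c.
Proof.
move=> n0 x0 xn; have := exp_mul_pow_le1 n0 x0 xn.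
have p0 : 0 <= (1 - x / INR n) ^ n.
  have n0' : 0 < INR n by apply/lt_0_INR/ltP.
  apply: pow_le; rewrite -(Rinv_r (INR n)); last lra.
  rewrite /Rdiv -Rmult_minus_distr_r; apply: Rmult_le_pos; first lra.
  by apply/Rlt_le/Rinv_0_lt_compat.
move: p0; set p := (1 - x / INR n) ^ n; nra.
Qed.

Lemma ln2_gt : 69 / 100 < ln 2.
Proof.
(* 1 < 2 (1 - 0.69 / 128)^128 is a rational inequality, decided exactly by lra. *)
have : exp (69 / 100) < 2.
  by apply: (@exp_lt_of_pow _ 128); rewrite ?INR_IZR_INZ //=; lra.
by move/ln_increasing; rewrite ln_exp; apply; apply: exp_pos.
Qed.

Lemma ln_ge_pow2 y j : 2 ^ j <= y -> 69 / 100 * INR j + 1 - 2 ^ j / y <= ln y.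
Proof.
move=> le_y; have p0 : 0 < 2 ^ j by apply: pow_lt; lra.
have y0 : 0 < y by lra.
have split_ln : ln y = INR j * ln 2 + - ln (2 ^ j / y).
  rewrite -ln_Rinv; last exact: Rdiv_lt_0_compat.
  rewrite -ln_pow; last lra.
  rewrite -ln_mult; [congr ln; field; lra | lra |].
  by apply/Rinv_0_lt_compat/Rdiv_lt_0_compat.
have := ln_le_sub1 (Rdiv_lt_0_compat _ _ p0 y0).
have := Rmult_le_compat_l (INR j) _ _ (pos_INR j) (Rlt_le _ _ ln2_gt).
lra.
Qed.

Lemma le_2sqrt a X : 0 <= X -> a ^ 2 <= 4 * X -> a <= 2 * sqrt X.
Proof. by move=> X0 aX; have := sqrt_pos X; have := sqrt_sqrt X X0; nra. Qed.

Lemma leq_INR m n : (m <= n)%N -> INR m <= INR n.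
Proof. by move/leP; apply: le_INR. Qed.

Lemma INR_expn m n : INR (m ^ n) = INR m ^ n.
Proof. by elim: n => [|n IH]; rewrite ?expn0 // expnS mult_INR IH. Qed.

Lemma INR_divn a b : (0 < b)%N -> INR (a %/ b) <= INR a / INR b.
Proof.
move=> b0; have b0' : 0 < INR b by apply/lt_0_INR/ltP.
apply: (Rmult_le_reg_r (INR b)) => //; rewrite /Rdiv Rmult_assoc Rinv_l ?Rmult_1_r; last lra.
by rewrite -mult_INR; apply: leq_INR; rewrite leq_divM.
Qed.

Lemma INR_subn_le_exp n c : (0 < n)%N -> INR (n - c) <= INR n * exp (- (INR c / INR n)).
Proof.
move=> n0; have n0' : 0 < INR n by apply/lt_0_INR/ltP.
have [c_le|c_gt] := leqP c n; last first.
  rewrite (eqP (ltnW c_gt : (n - c == 0)%N)) /=.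
  by apply: Rmult_le_pos; [lra | apply/Rlt_le/exp_pos].
rewrite minus_INR; last exact/leP.
have := Rmult_le_compat_l _ _ _ (Rlt_le _ _ n0') (exp_ineq1_le (- (INR c / INR n))).
by have -> : INR n * (1 + - (INR c / INR n)) = INR n - INR c by field; lra.
Qed.

Definition greedy_witness (q m : nat) : Prop :=
  [/\ (greedy_bound (q ^ 3) q m < 2 * (q - 1))%N, ((m.+1 * (q - 1)).+1 < q ^ 3)%N &
      INR m.+1 <= 2 * sqrt ((INR q + 1) * ln (INR q + 1)) + 2].

Definition greedy_exponent (q k : nat) : R :=
  (INR q - 1) ^ 2 * (INR k * (INR k - 1)) / (2 * INR q ^ 3).

Lemma greedy_exponentS q k : (0 < q)%N ->
  greedy_exponent q k.+1 <= greedy_exponent q k + INR (cover_count q k) / INR q ^ 3.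
Proof.
move=> q0; have Q3 : 0 < INR q ^ 3 by apply/pow_lt/lt_0_INR/ltP.
have cover_ge : (INR q - 1) ^ 2 * INR k <= INR (cover_count q k).
  rewrite /cover_count mult_INR S_INR mult_INR minus_INR /=; last exact/leP.
  have Q1 : 1 <= INR q by exact: (leq_INR q0).
  by have := pos_INR k; nra.
have : (INR q - 1) ^ 2 * INR k / INR q ^ 3 <= INR (cover_count q k) / INR q ^ 3.
  by apply: Rmult_le_compat_r => //; apply/Rlt_le/Rinv_0_lt_compat.
suff -> : greedy_exponent q k.+1 = greedy_exponent q k + (INR q - 1) ^ 2 * INR k / INR q ^ 3 by lra.
by rewrite /greedy_exponent S_INR; field; apply/not_0_INR/eqP; rewrite -lt0n.
Qed.

Lemma greedy_bound_le_exp q k : (0 < q)%N ->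
  INR (greedy_bound (q ^ 3) q k) <= INR q ^ 3 * exp (- greedy_exponent q k).
Proof.
move=> q0; have q3 : (0 < q ^ 3)%N by rewrite expn_gt0 q0.
have Q3 : 0 < INR q ^ 3 by apply/pow_lt/lt_0_INR/ltP.
elim: k => [|k IH].
  rewrite /greedy_exponent Rmult_0_l Rmult_0_r /Rdiv Rmult_0_l Ropp_0 exp_0 Rmult_1_r -INR_expn.
  exact/leq_INR/leq_subr.
set c := cover_count q k; cbn [greedy_bound]; rewrite -/c.
apply: Rle_trans (INR_divn _ q3) _; rewrite mult_INR INR_expn.
have := INR_subn_le_exp c q3; rewrite INR_expn => sub_le.
apply: (Rle_trans _ (INR (greedy_bound (q ^ 3) q k) * exp (- (INR c / INR q ^ 3)))).
  rewrite /Rdiv Rmult_assoc; apply: Rmult_le_compat_l; first exact: pos_INR.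
  apply: (Rmult_le_reg_r (INR q ^ 3)) => //.
  by rewrite Rmult_assoc Rinv_l ?Rmult_1_r; [rewrite Rmult_comm | lra].
apply: Rle_trans (Rmult_le_compat_r _ _ _ (Rlt_le _ _ (exp_pos _)) IH) _.
rewrite Rmult_assoc -exp_plus; apply: Rmult_le_compat_l; first lra.
by apply: exp_le; have := greedy_exponentS k q0; rewrite -/c; lra.
Qed.

Lemma sqrt_log_poly_lt t : 20 <= t ->
  t * t * (2 * (t - 1)) < (69 / 100 * (t * t - 1) - 8 * (t - 1)) ^ 2.
Proof.
(* In w = t - 20 the difference is a polynomial with positive coefficients. *)
move=> t20; set w := t - 20; have w0 : 0 <= w by rewrite /w; lra.
have -> : t = w + 20 by rewrite /w; ring.
have := pow_le w 2 w0; have := pow_le w 3 w0; have := pow_le w 4 w0.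
nra.
Qed.

Section LargeQ.
Variable Q : R.
Hypothesis Q_ge : 400 <= Q.
Let L := ln (Q + 1).
Let s := sqrt ((Q + 1) * L).

Lemma log_term_ge0 : 0 <= L.
Proof. by apply: ln_ge0; lra. Qed.

Lemma sqrt_term_sq : s * s = (Q + 1) * L.
Proof. by apply: sqrt_sqrt; apply: Rmult_le_pos; [lra | apply: log_term_ge0]. Qed.

Lemma log_terms_lt : 4 * L + s < 69 / 100 * Q.
Proof.
set t := sqrt (Q + 1).
have t2 : t * t = Q + 1 by apply: sqrt_sqrt; lra.
have t20 : 20 <= t by rewrite /t -(sqrt_square 20); [apply: sqrt_le_1_alt | ]; lra.
have Lt : L <= 2 * (t - 1).
  have t0 : 0 < t by lra.
  by rewrite /L -t2 ln_mult //; have := ln_le_sub1 t0; lra.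
have := log_term_ge0; have := sqrt_pos ((Q + 1) * L); rewrite -/s => s0 L0.
have s_lt : s < 69 / 100 * (t * t - 1) - 8 * (t - 1).
  apply: Rsqr_incrst_0; [rewrite /Rsqr sqrt_term_sq | exact: s0 | nra].
  have : (Q + 1) * L <= t * t * (2 * (t - 1)) by rewrite t2; apply: Rmult_le_compat_l; lra.
  by have := sqrt_log_poly_lt t20; lra.
lra.
Qed.

Lemma sqrt_term_ge1 : 1 <= s.
Proof.
have L1 : 1 <= L by apply: ln_ge_of_exp_le; [lra | have := exp_le_3; lra].
have := sqrt_term_sq; have := sqrt_pos ((Q + 1) * L); rewrite -/s; nra.
Qed.

Lemma greedy_exponent_ge M : 2 * s <= M ->
  2 * L - (4 * L + s) / Q <= (Q - 1) ^ 2 * (M * (M - 1)) / (2 * Q ^ 3).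
Proof.
move=> sM; have s1 := sqrt_term_ge1; have L0 := log_term_ge0.
have Q3 : 0 < Q ^ 3 by apply: pow_lt; lra.
apply: (Rle_trans _ ((Q - 1) ^ 2 * (2 * s * (2 * s - 1)) / (2 * Q ^ 3))); last first.
  apply: Rmult_le_compat_r; first by apply/Rlt_le/Rinv_0_lt_compat; lra.
  by apply: Rmult_le_compat_l; [apply: pow2_ge_0 | nra].
have -> : 2 * s * (2 * s - 1) = 4 * ((Q + 1) * L) - 2 * s by rewrite -sqrt_term_sq; ring.
have gap : (Q - 1) ^ 2 * (4 * ((Q + 1) * L) - 2 * s) / (2 * Q ^ 3) - (2 * L - (4 * L + s) / Q)
         = (2 * L * (Q ^ 2 - Q + 1) + s * (2 * Q - 1)) / Q ^ 3 by field; lra.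
have : 0 <= (2 * L * (Q ^ 2 - Q + 1) + s * (2 * Q - 1)) / Q ^ 3.
  by apply: Rmult_le_pos; [nra | apply/Rlt_le/Rinv_0_lt_compat].
lra.
Qed.

Lemma cube_mul_exp_lt M : 2 * s <= M ->
  Q ^ 3 * exp (- ((Q - 1) ^ 2 * (M * (M - 1)) / (2 * Q ^ 3))) < 2 * (Q - 1).
Proof.
(* Q^3 <= (Q - 1) exp (2 L), so it suffices that E > 2 L - ln 2. *)
move=> sM; set E := _ / (2 * Q ^ 3); set d := (4 * L + s) / Q.
have d_lt : d < ln 2.
  apply: (Rlt_trans _ (69 / 100)); last exact: ln2_gt.
  apply: (Rmult_lt_reg_r Q); first lra.
  by rewrite /d /Rdiv Rmult_assoc Rinv_l; have := log_terms_lt; lra.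
have exp_d : exp d < 2 by rewrite -(exp_ln 2); [apply: exp_increasing | lra].
have E_ge : 2 * L - d <= E by apply: greedy_exponent_ge.
have exp_2L : exp (2 * L) = (Q + 1) ^ 2.
  by rewrite (_ : 2 * L = L + L) ?exp_plus ?exp_ln /=; [ring | lra | ring].
have : (Q + 1) ^ 2 <= exp E * exp d by rewrite -exp_plus -exp_2L; apply: exp_le; lra.
have eE := exp_pos E; rewrite exp_Ropp => sq_le.
have cube : Q ^ 3 <= (Q - 1) * (Q + 1) ^ 2 by nra.
have : (Q - 1) * (Q + 1) ^ 2 <= (Q - 1) * (exp E * exp d) by apply: Rmult_le_compat_l; lra.
have : (Q - 1) * (exp E * exp d) < (Q - 1) * (exp E * 2).
  by apply: Rmult_lt_compat_l; [lra | apply: Rmult_lt_compat_l].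
move=> ? ?; apply: (Rmult_lt_reg_r (exp E)) => //.
by rewrite Rmult_assoc Rinv_l; lra.
Qed.

End LargeQ.

Lemma large_q_size_lt q m : (400 <= q)%N -> (m <= 2 * q)%N -> ((m.+1 * (q - 1)).+1 < q ^ 3)%N.
Proof. by move=> q400 mq; rewrite !expnS expn0 muln1; nia. Qed.

Lemma greedy_witness_large q : (400 <= q)%N -> exists m, greedy_witness q m.
Proof.
move=> q400; have Q400 : 400 <= INR q by have := leq_INR q400; rewrite INR_IZR_INZ.
set s := sqrt ((INR q + 1) * ln (INR q + 1)).
have s0 : 0 <= s by apply: sqrt_pos.
have [up_gt up_le] := archimed (2 * s).
have up0 : Z.le 0 (up (2 * s)) by apply: le_IZR; lra.
set m := Z.to_nat (up (2 * s)).
have M_eq : INR m = IZR (up (2 * s)) by rewrite INR_IZR_INZ Z2Nat.id.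
have s_lt := log_terms_lt Q400; have L0 := log_term_ge0 Q400; rewrite -/s in s_lt.
exists m; split.
- apply/ltP/INR_lt; rewrite mult_INR minus_INR; last by apply/leP; apply: leq_trans q400.
  apply: Rle_lt_trans (greedy_bound_le_exp m (leq_trans _ q400)) _ => //.
  have two : INR 2 = 2 by rewrite INR_IZR_INZ.
  by rewrite two /greedy_exponent; apply: cube_mul_exp_lt; rewrite // M_eq -/s; lra.
- apply: large_q_size_lt => //; apply/leP/INR_le.
  by rewrite mult_INR M_eq /=; lra.
by rewrite S_INR M_eq -/s; lra.
Qed.

Lemma sqrt_bound_of_cert q m j : (2 ^ j <= q.+1)%N ->
  (100 * (m - 1) ^ 2 <= 276 * j * q.+1 + 400 * (q.+1 - 2 ^ j))%N ->
  INR m.+1 <= 2 * sqrt ((INR q + 1) * ln (INR q + 1)) + 2.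
Proof.
move=> pow_le cert; rewrite -S_INR; set a := (m - 1)%N; set Q := INR q.+1.
have two : INR 2 = 2 by rewrite INR_IZR_INZ.
have pow_le' : 2 ^ j <= Q by rewrite -two -INR_expn; apply: leq_INR.
have cert' : 100 * INR a ^ 2 <= 276 * INR j * Q + 400 * (Q - 2 ^ j).
  move/leq_INR: cert; rewrite (plus_INR (276 * j * q.+1)) (mult_INR 100) (mult_INR 400).
  rewrite (mult_INR (276 * j)) (mult_INR 276) (minus_INR _ (2 ^ j)); last exact/leP.
  by rewrite !INR_expn two !(INR_IZR_INZ 100, INR_IZR_INZ 276, INR_IZR_INZ 400).
have Q0 : 0 < Q by apply: lt_0_INR; apply/ltP.
have lnQ := ln_ge_pow2 pow_le'.
have m_le : INR m.+1 <= INR a + 2.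
  by rewrite -two -plus_INR; apply: leq_INR; rewrite plusE addn2 ltnS /a subn1 leqSpred.
suff : INR a <= 2 * sqrt (Q * ln Q) by lra.
have Q1 : 1 <= Q by apply: (Rle_trans _ (2 ^ j)) => //; apply: pow_R1_Rle; lra.
apply: le_2sqrt; first by apply: Rmult_le_pos; [lra | apply: ln_ge0].
have : 4 * Q * (69 / 100 * INR j + 1 - 2 ^ j / Q) <= 4 * Q * ln Q.
  by apply: Rmult_le_compat_l; lra.
have -> : 4 * Q * (69 / 100 * INR j + 1 - 2 ^ j / Q) =
  (276 * INR j * Q + 400 * (Q - 2 ^ j)) / 100 by field; lra.
lra.
Qed.

Definition cover_countN (q k : N) : N := ((q - 1) * (k * (q - 1) + 1))%num.

Fixpoint greedy_boundN (q : N) (k : nat) : N :=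
  if k is k'.+1 then (greedy_boundN q k' * (q ^ 3 - cover_countN q (N.of_nat k')) / q ^ 3)%num
  else (q ^ 3 - 1)%num.

(* Only a search: its result is re-checked by small_q_test. *)
Fixpoint first_small_step (q V : N) (k fuel : nat) : nat :=
  if (V <? 2 * (q - 1))%num then k
  else if fuel is f.+1 then
    first_small_step q (V * (q ^ 3 - cover_countN q (N.of_nat k)) / q ^ 3)%num k.+1 f
  else k.

(* The last test certifies (m - 1)^2 <= 4 (q + 1) ln (q + 1) by ln_ge_pow2. *)
Definition small_q_test (q : N) : bool :=
  let m := first_small_step q (q ^ 3 - 1) 0 200 in
  let j := N.log2 (q + 1) in
  [&& (greedy_boundN q m <? 2 * (q - 1))%num, ((N.of_nat m + 1) * (q - 1) + 1 <? q ^ 3)%num,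
      (2 ^ j <=? q + 1)%num &
      (100 * (N.of_nat m - 1) ^ 2 <=? 276 * j * (q + 1) + 400 * (q + 1 - 2 ^ j))%num].

Lemma small_q_tests : all (fun q => small_q_test (N.of_nat q)) (iota 2 398).
Proof. by vm_compute. Qed.

Lemma expn_pow m n : (m ^ n)%N = Nat.pow m n.
Proof. by elim: n => // n IH; rewrite expnS IH. Qed.

Lemma divn_div m d : (m %/ d)%N = Nat.div m d.
Proof.
case: d => [|d]; first by rewrite divn0.
apply: (Nat.div_unique m d.+1 (m %/ d.+1) (m %% d.+1)); first exact/ltP/ltn_pmod.
by rewrite {1}(divn_eq m d.+1) mulnC.
Qed.

Lemma greedy_boundN_spec q k :
  N.to_nat (greedy_boundN (N.of_nat q) k) = greedy_bound (q ^ 3) q k.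
Proof.
elim: k => [|k IH]; cbn [greedy_boundN greedy_bound]; rewrite /cover_countN
  !(N2Nat.inj_div, N2Nat.inj_sub, N2Nat.inj_mul, N2Nat.inj_add, N2Nat.inj_pow) ?Nat2N.id.
  by rewrite -expn_pow.
by rewrite -expn_pow IH -divn_div Nat.add_1_r.
Qed.

Lemma N_ltb_nat a b : (a <? b)%num -> (N.to_nat a < N.to_nat b)%N.
Proof. by move/N.ltb_lt => ab; apply/ltP; lia. Qed.

Lemma N_leb_nat a b : (a <=? b)%num -> (N.to_nat a <= N.to_nat b)%N.
Proof. by move/N.leb_le => ab; apply/leP; lia. Qed.

Lemma greedy_witness_small q : (2 <= q < 400)%N -> exists m, greedy_witness q m.
Proof.
move=> q_range; have : small_q_test (N.of_nat q) by apply: (allP small_q_tests); rewrite mem_iota.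
rewrite /small_q_test; set m := first_small_step _ _ _ _; set j := N.log2 _.
case/and4P => /N_ltb_nat small_bound /N_ltb_nat small_m /N_leb_nat pow_le /N_leb_nat cert.
exists m; split.
- move: small_bound; rewrite greedy_boundN_spec.
  by rewrite !(N2Nat.inj_mul, N2Nat.inj_sub) !Nat2N.id.
- move: small_m; rewrite !(N2Nat.inj_add, N2Nat.inj_mul, N2Nat.inj_sub, N2Nat.inj_pow) !Nat2N.id.
  by rewrite -expn_pow !Nat.add_1_r.
apply: (@sqrt_bound_of_cert _ _ (N.to_nat j)).
  by move: pow_le; rewrite !(N2Nat.inj_add, N2Nat.inj_pow) !Nat2N.id -expn_pow Nat.add_1_r.
move: cert; rewrite !(N2Nat.inj_add, N2Nat.inj_mul, N2Nat.inj_sub, N2Nat.inj_pow) !Nat2N.id.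
by rewrite -!expn_pow !Nat.add_1_r.
Qed.

Lemma exists_greedy_witness q : (2 <= q)%N -> exists m, greedy_witness q m.
Proof.
move=> q2; have [q_small|q_large] := ltnP q 400; last exact: greedy_witness_large.
by apply: greedy_witness_small; rewrite q2.
Qed.

Theorem corollary1 (F : finFieldType) :
  (exists n : nat, has_code 2 3 F n) /\
  (INR (ell 2 3 F) <= 2 * sqrt ((INR #|F| + 1) * ln (INR #|F| + 1)) + 2)%R.
Proof.
have [m [small_bound small_m bound]] := exists_greedy_witness (card_finNzRing_gt1 F).
have [n n_le codeF] := has_code_of_greedy_bound small_bound small_m.
split; first by exists n.
by apply: Rle_trans bound; apply/leq_INR/(leq_trans (ell_le codeF)).
Qed.
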